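(* Let $\mathcal{P}$ be a bidirected 1-dimensional PVASS, $k\in\mathbb{N}$, and $p,q$ states with $\gamma_k(p,q)=(a,b)$. If there exists a path $P\in\mathrm{Paths}(p,q)_k$ with $w(P)>b$, then $\delta_k(p)\ge m(P)$.
   Context: A 1-dimensional PVASS $\mathcal{P}=(Q,\Gamma,T)$ has transitions $(p,v,\alpha,q)$ with $v\in\mathbb{Z}$, $\alpha\in\{a,\bar a\mid a\in\Gamma\}\cup\{\varepsilon\}$; it is bidirected if $(p,v,\alpha,q)\in T$ implies $(q,-v,\bar\alpha,p)\in T$ ($\bar{\bar a}=a$, $\bar\varepsilon=\varepsilon$). The one-step $\mathbb{Z}$-relation $\hookrightarrow$ on $Q\times\mathbb{Z}\times\Gamma^*$ is defined like the usual step relation (push $\alpha\in\Gamma$, pop $\bar a$ when the top is $a$, add $v$ to the counter) but without requiring the counter to stay nonnegative. A path from $p$ to $q$ is a start state $p$ together with a sequence of transitions inducing a $\hookrightarrow$-run $(p_1,x_1,w_1)\hookrightarrow\dots\hookrightarrow(p_j,x_j,w_j)$ with $p_1=p$, $p_j=q$, $x_1=0$, $w_1=w_j=\varepsilon$. For such $P$: $\mathit{MaxSH}(P)=\max_i|w_i|$, $w(P)=x_j$, $m(P)=\min_i x_i$ ($\le0$). $\mathrm{Paths}(p,q)_k$ is the set of paths from $p$ to $q$ with $\mathit{MaxSH}\le k$. Define $\gamma_k(p,q)=(a,b)$ with $a=\max\{m(P)\mid P\in\mathrm{Paths}(p,q)_k\}$ and $b=\sup\{w(P)\mid P\in\mathrm{Paths}(p,q)_k,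 m(P)=a\}$, where $\max\emptyset=\sup\emptyset=-\infty$ and $b$ may be $\omega$ (i.e.\ $+\infty$). Define $\delta_k(p)=\max\{m(P)\mid P\in\mathrm{Paths}(p,p)_k,\ w(P)>0\}$ (with $\max\emptyset=-\infty$). *)

From Stdlib Require Import ZArith List FinFun.
Import ListNotations.
Open Scope Z_scope.

Set Implicit Arguments.

Inductive sop (G : Type) : Type :=
| Push (a : G)
| Pop (a : G)
| Eps.
Arguments Eps {G}.

Definition sop_bar (G : Type) (o : sop G) : sop G :=
  match o with Push a => Pop a | Pop a => Push a | Eps => Eps end.

Definition trans (Q G : Type) : Type := (Q * Z * sop G * Q)%type.

(** A 1-dimensional PVASS (Q, Gamma, T): Q, Gamma finite types, T a finite
    set (list) of transitions. *)
Definition bidirected (Q G : Type) (T : list (trans Q G)) : Prop :=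
  forall p v al q, In (p, v, al, q) T -> In (q, -v, sop_bar al, p) T.

(** Configurations (state, counter in Z, stack); head of list = top. *)
Definition conf (Q G : Type) : Type := (Q * Z * list G)%type.

Definition cstate Q G (c : conf Q G) : Q := fst (fst c).
Definition ccnt Q G (c : conf Q G) : Z := snd (fst c).
Definition cstack Q G (c : conf Q G) : list G := snd c.

(** One step of the Z-relation (no nonnegativity requirement). *)
Definition zstep Q G (c : conf Q G) (t : trans Q G) (c' : conf Q G) : Prop :=
  match t with
  | (p, v, al, q) =>
      cstate c = p /\ cstate c' = q /\ ccnt c' = ccnt c + v /\
      match al with
      | Push a => cstack c' = a :: cstack c
      | Pop a => cstack c = a :: cstack c'
      | Eps => cstack c' = cstack c
      end
  end.

Inductive zrun Q G : conf Q G -> list (trans Q G) -> list (conf Q G) -> Prop :=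
| zrun_nil c : zrun c [] [c]
| zrun_cons c t ts c' cs :
    zstep c t c' -> zrun c' ts cs -> zrun c (t :: ts) (c :: cs).

Definition is_path Q G (T : list (trans Q G)) (p q : Q)
    (ts : list (trans Q G)) (cs : list (conf Q G)) : Prop :=
  Forall (fun t => In t T) ts /\
  zrun (p, 0, []) ts cs /\
  exists x, last cs (p, 0, []) = (q, x, []).

Definition maxSH Q G (cs : list (conf Q G)) : nat :=
  list_max (map (fun c => length (cstack c)) cs).

Definition wP Q G (cs : list (conf Q G)) : Z :=
  match cs with
  | [] => 0
  | c :: _ => ccnt (last cs c)
  end.

Definition mP Q G (cs : list (conf Q G)) : Z :=
  match map (@ccnt Q G) cs with
  | [] => 0
  | x :: xs => fold_left Z.min xs x
  end.

Definition inPaths Q G (T : list (trans Q G)) (k : nat) (p q : Q)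
    (ts : list (trans Q G)) (cs : list (conf Q G)) : Prop :=
  is_path T p q ts cs /\ (maxSH cs <= k)%nat.

Inductive ext : Type := NegInf | Fin (z : Z) | PosInf.

Definition ext_le (e f : ext) : Prop :=
  match e, f with
  | NegInf, _ => True
  | _, PosInf => True
  | Fin x, Fin y => x <= y
  | _, _ => False
  end.

Definition ext_lt (e f : ext) : Prop := ext_le e f /\ e <> f.

Definition is_max_ext (S : Z -> Prop) (e : ext) : Prop :=
  (e = NegInf /\ forall z, ~ S z) \/
  (exists z, e = Fin z /\ S z /\ forall y, S y -> y <= z).

Definition is_sup_ext (S : Z -> Prop) (e : ext) : Prop :=
  match e with
  | NegInf => forall z, ~ S z
  | Fin z => (forall y, S y -> y <= z) /\
             (forall u, (forall y, S y -> y <= u) -> z <= u)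
  | PosInf => forall n, exists y, S y /\ n < y
  end.

Definition is_gamma Q G (T : list (trans Q G)) (k : nat) (p q : Q)
    (a b : ext) : Prop :=
  is_max_ext (fun z => exists ts cs, inPaths T k p q ts cs /\ z = mP cs) a /\
  is_sup_ext (fun z => exists ts cs, inPaths T k p q ts cs /\
                          Fin (mP cs) = a /\ z = wP cs) b.

Definition is_delta Q G (T : list (trans Q G)) (k : nat) (p : Q) (d : ext) : Prop :=
  is_max_ext (fun z => exists ts cs, inPaths T k p p ts cs /\
                          0 < wP cs /\ z = mP cs) d.

From Stdlib Require Import ZArith List FinFun.
From Stdlib Require Import Lia Classical Zwf.
Import ListNotations.
Open Scope Z_scope.

Set Implicit Arguments.

(** Let [P0] realise [gamma_k(p,q) = (a,b)], i.e. [m(P0) = a] and [w(P0) <= b].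
    By bidirectedness [P0] can be run backwards, and the counter can be shifted
    freely in the Z-semantics; so following [P] and then [P0] reversed and
    shifted by [d = w(P) - w(P0) > 0] gives a cycle on [p] of weight [d], with
    the same stack heights, whose counter values are those of [P] and those of
    [P0] raised by [d], hence never below [min(m(P), a + d) = m(P)] (as
    [m(P) <= a]).  So [m(P)] is attained by a positive cycle, and [delta_k(p)]
    exists because the minima of paths from counter 0 are bounded above by 0. *)

Lemma last_cons_irrel (A : Type) (x : A) l d d' : last (x :: l) d = last (x :: l) d'.
Proof. revert x; induction l as [|y l IH]; intros x; [reflexivity | exact (IH y)]. Qed.

Lemma last_app_last (A : Type) (l l' : list A) x d :
  last l d = x -> last (l ++ l') d = last (x :: l') d.
Proof.
  induction l as [|y l IH]; simpl; intros Hx.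
  - subst; destruct l'; reflexivity.
  - destruct l as [|z l]; [subst; reflexivity | exact (IH Hx)].
Qed.

Lemma in_app_tl (A : Type) (x : A) l l' : In x (l ++ tl l') -> In x l \/ In x l'.
Proof.
  intros Hx; apply in_app_or in Hx as [Hx | Hx]; [now left | right].
  destruct l'; [destruct Hx | right; exact Hx].
Qed.

Lemma fold_left_min_ge_iff (xs : list Z) x z :
  z <= fold_left Z.min xs x <-> z <= x /\ Forall (Z.le z) xs.
Proof.
  revert x; induction xs as [|y xs IH]; intros x; simpl.
  - split; [split; auto | tauto].
  - rewrite IH, Z.min_glb_iff, Forall_cons_iff; tauto.
Qed.

Lemma Z_bounded_max (S : Z -> Prop) (B z : Z) :
  S z -> (forall y, S y -> y <= B) ->
  exists m, S m /\ z <= m /\ forall y, S y -> y <= m.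
Proof.
  intros Hz HB; revert Hz.
  induction z as [z IH] using (well_founded_ind (Zwf_up_well_founded B)); intros Hz.
  destruct (classic (exists y, S y /\ z < y)) as [[y [Hy Hzy]] | Hno].
  - destruct (IH y (conj Hzy (HB y Hy)) Hy) as (m & Hm & Hym & Hmax).
    exists m; split; [exact Hm | split; [lia | exact Hmax]].
  - exists z; split; [exact Hz | split; [lia |]].
    intros y Hy; apply Z.nlt_ge; intros Hzy; apply Hno; eauto.
Qed.

Section Runs.

Variables Q G : Type.
Implicit Types (c : conf Q G) (ts : list (trans Q G)) (cs : list (conf Q G)).

Lemma zrun_head c ts cs : zrun c ts cs -> cs = c :: tl cs.
Proof. now destruct 1. Qed.

Lemma zrun_last_step c ts c' cs : zrun c' ts cs -> last (c :: cs) c = last cs c'.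
Proof.
  intros Hr; rewrite (zrun_head Hr); exact (last_cons_irrel _ _ c c').
Qed.

Lemma zrun_app c c' ts1 ts2 cs1 cs2 :
  zrun c ts1 cs1 -> last cs1 c = c' -> zrun c' ts2 cs2 ->
  zrun c (ts1 ++ ts2) (cs1 ++ tl cs2).
Proof.
  intros Hr1; revert c' ts2 cs2.
  induction Hr1 as [c | c t ts c'' cs Hs Hr IH]; intros c' ts2 cs2 Hlast Hr2.
  - simpl in Hlast; subst c'; rewrite (zrun_head Hr2) in Hr2; exact Hr2.
  - econstructor; [exact Hs |].
    apply IH with c'; [| exact Hr2].
    rewrite <- (zrun_last_step c Hr); exact Hlast.
Qed.

Lemma wP_zrun c ts cs : zrun c ts cs -> wP cs = ccnt (last cs c).
Proof. intros Hr; rewrite (zrun_head Hr); reflexivity. Qed.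

Lemma mP_ge_iff cs z :
  cs <> [] -> (z <= mP cs <-> forall c, In c cs -> z <= ccnt c).
Proof.
  destruct cs as [|c0 cs]; [congruence | intros _].
  unfold mP; simpl; rewrite fold_left_min_ge_iff, Forall_forall.
  split.
  - intros [H0 Hcs] c [<- | Hc]; [exact H0 | apply Hcs, in_map, Hc].
  - intros H; split; [apply H; left; reflexivity |].
    intros x Hx; apply in_map_iff in Hx as (c & <- & Hc); apply H; right; exact Hc.
Qed.

Lemma mP_le_ccnt {cs c} : In c cs -> mP cs <= ccnt c.
Proof.
  intros Hc; apply (mP_ge_iff (cs := cs) (mP cs)); [intros ->; destruct Hc | reflexivity | exact Hc].
Qed.

Lemma maxSH_le_iff cs k :
  (maxSH cs <= k)%nat <-> forall c, In c cs -> (length (cstack c) <= k)%nat.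
Proof.
  unfold maxSH; rewrite list_max_le, Forall_forall; split.
  - intros H c Hc; apply H, (in_map (fun c => length (cstack c))), Hc.
  - intros H n Hn; apply in_map_iff in Hn as (c & <- & Hc); exact (H c Hc).
Qed.

Variable T : list (trans Q G).

Lemma mP_path_nonpos p q ts cs :
  is_path T p q ts cs -> mP cs <= 0.
Proof.
  intros (_ & Hr & _); change (mP cs <= ccnt ((p, 0, []) : conf Q G)); apply mP_le_ccnt.
  rewrite (zrun_head Hr); left; reflexivity.
Qed.

Definition shift (d : Z) c : conf Q G := (cstate c, ccnt c + d, cstack c).

Hypothesis Hbid : bidirected T.

Lemma zstep_reverse_shift d {c t c'} :
  In t T -> zstep c t c' -> exists t', In t' T /\ zstep (shift d c') t' (shift d c).
Proof.
  destruct t as [[[p v] al] q]; intros Hin Hs.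
  exists (q, -v, sop_bar al, p); split; [apply Hbid, Hin |].
  destruct c as [[s x] w], c' as [[s' x'] w'].
  unfold zstep, shift, cstate, ccnt, cstack in *; simpl in *.
  destruct al; intuition (try lia); congruence.
Qed.

Lemma zrun_reverse_shift d c ts cs :
  Forall (fun t => In t T) ts -> zrun c ts cs ->
  exists ts', Forall (fun t => In t T) ts' /\
    zrun (shift d (last cs c)) ts' (map (shift d) (rev cs)).
Proof.
  intros HT Hr; induction Hr as [c | c t ts c' cs Hs Hr IH].
  - exists []; split; constructor.
  - apply Forall_cons_iff in HT as [Ht HT].
    destruct (IH HT) as (ts' & HT' & Hr').
    destruct (zstep_reverse_shift d Ht Hs) as (t' & Ht' & Hs').
    exists (ts' ++ [t']); split; [apply Forall_app; auto |].
    rewrite (zrun_last_step c Hr); simpl; rewrite map_app.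
    apply (zrun_app (c' := shift d c') (cs2 := [shift d c'; shift d c]));
      [exact Hr' | | econstructor; [exact Hs' | constructor]].
    rewrite (zrun_head Hr); simpl; rewrite map_app; apply last_last.
Qed.

Lemma zrun_app_reverse_shift d c c0 ts ts0 cs cs0 :
  Forall (fun t => In t T) ts0 -> zrun c ts cs -> zrun c0 ts0 cs0 ->
  last cs c = shift d (last cs0 c0) ->
  exists ts', Forall (fun t => In t T) ts' /\
    zrun c (ts ++ ts') (cs ++ tl (map (shift d) (rev cs0))) /\
    last (cs ++ tl (map (shift d) (rev cs0))) c = shift d c0.
Proof.
  intros HT0 Hr Hr0 Hjoin.
  destruct (zrun_reverse_shift d HT0 Hr0) as (ts' & HT' & Hr').
  exists ts'; split; [exact HT' | split; [exact (zrun_app Hr Hjoin Hr') |]].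
  rewrite (last_app_last _ _ _ Hjoin), <- (zrun_head Hr'), (zrun_head Hr0); simpl.
  rewrite map_app; apply last_last.
Qed.

Lemma inPaths_cycle k p q ts cs ts0 cs0 :
  inPaths T k p q ts cs -> inPaths T k p q ts0 cs0 ->
  exists ts' cs', inPaths T k p p ts' cs' /\ wP cs' = wP cs - wP cs0 /\
    Z.min (mP cs) (mP cs0 + (wP cs - wP cs0)) <= mP cs'.
Proof.
  intros ((HT & Hr & x & Hx) & Hk) ((HT0 & Hr0 & x0 & Hx0) & Hk0).
  rewrite (wP_zrun Hr), (wP_zrun Hr0), Hx, Hx0; cbn.
  set (d := x - x0).
  assert (Hjoin : last cs (p, 0, []) = shift d (last cs0 (p, 0, []))).
  { rewrite Hx, Hx0; unfold shift, d; cbn; do 2 f_equal; lia. }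
  destruct (zrun_app_reverse_shift HT0 Hr Hr0 Hjoin) as (ts1 & HT1 & Hcyc & Hend).
  set (cs' := cs ++ _) in Hcyc, Hend.
  assert (Hin : forall c, In c cs' -> In c cs \/ exists c0, In c0 cs0 /\ c = shift d c0).
  { intros c Hc; apply in_app_tl in Hc as [Hc | Hc]; [now left | right].
    apply in_map_iff in Hc as (c0 & <- & Hc0); exists c0; split; [apply in_rev |]; auto. }
  exists (ts ++ ts1), cs'; split; [split; [split |] | split].
  - apply Forall_app; auto.
  - split; [exact Hcyc | exists d; exact Hend].
  - rewrite maxSH_le_iff in Hk, Hk0 |- *; intros c Hc.
    destruct (Hin c Hc) as [Hc' | (c0 & Hc0 & ->)]; [exact (Hk c Hc') | exact (Hk0 c0 Hc0)].
  - rewrite (wP_zrun Hcyc), Hend; reflexivity.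
  - apply mP_ge_iff; [rewrite (zrun_head Hcyc); discriminate |].
    intros c Hc; destruct (Hin c Hc) as [Hc' | (c0 & Hc0 & ->)].
    + pose proof (mP_le_ccnt Hc'); lia.
    + pose proof (mP_le_ccnt Hc0); unfold shift; cbn in *; lia.
Qed.

End Runs.

Lemma is_gamma_lighter_optimal_path (Q G : Type) (T : list (trans Q G)) k p q a b ts cs :
  is_gamma T k p q a b -> inPaths T k p q ts cs -> ext_lt b (Fin (wP cs)) ->
  exists ts0 cs0, inPaths T k p q ts0 cs0 /\ mP cs <= mP cs0 /\ wP cs0 < wP cs.
Proof.
  intros [[[-> Hnone] | (a0 & -> & (ts0 & cs0 & HP0 & ->) & Hmax)] Hb] HP [Hle Hne].
  - destruct (Hnone (mP cs)); eauto.
  - exists ts0, cs0; split; [exact HP0 | split; [apply Hmax; eauto |]].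
    destruct b as [| b0 |]; simpl in Hb, Hle.
    + destruct (Hb (wP cs0)); eauto.
    + assert (wP cs0 <= b0) by (apply (proj1 Hb); eauto).
      assert (b0 <> wP cs) by congruence.
      lia.
    + contradiction.
Qed.

Lemma is_delta_exists_ge (Q G : Type) (T : list (trans Q G)) k p z :
  (exists ts cs, inPaths T k p p ts cs /\ 0 < wP cs /\ z <= mP cs) ->
  exists d, is_delta T k p d /\ ext_le (Fin z) d.
Proof.
  intros (ts & cs & HP & Hw & Hz).
  destruct (@Z_bounded_max
              (fun z => exists ts cs, inPaths T k p p ts cs /\ 0 < wP cs /\ z = mP cs)
              0 (mP cs)) as (m & Hm & Hcsm & Hmax).
  - eauto.
  - intros y (ts' & cs' & (HP' & _) & _ & ->); exact (mP_path_nonpos HP').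
  - exists (Fin m); split; [right; exists m; auto | simpl; lia].
Qed.

Theorem lemma21 (Q G : Type) (HQ : Finite Q) (HG : Finite G)
    (T : list (trans Q G)) (Hbid : bidirected T)
    (k : nat) (p q : Q) (a b : ext) (Hg : is_gamma T k p q a b)
    (ts : list (trans Q G)) (cs : list (conf Q G))
    (HP : inPaths T k p q ts cs) (Hw : ext_lt b (Fin (wP cs))) :
  exists d, is_delta T k p d /\ ext_le (Fin (mP cs)) d.
Proof.
  destruct (is_gamma_lighter_optimal_path Hg HP Hw) as (ts0 & cs0 & HP0 & Hm & Hlighter).
  destruct (inPaths_cycle Hbid HP HP0) as (ts' & cs' & Hcyc & Hwcyc & Hmcyc).
  apply is_delta_exists_ge; exists ts', cs'; split; [exact Hcyc | split; lia].
Qed.
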